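(* Let $\ell\ge1$, $r\ge3$ and $n\ge\max\{3r-5,\,2\ell+3\}$. Then $$\min_{C}|H_n^{(r)}(C)|<\min_{C'}|H_n^{(r)}(C')|,$$ where $C$ ranges over semi-valid tuples of length $2\ell+1$ in $\Omega_n$ and $C'$ over semi-valid tuples of length $2\ell+3$ in $\Omega_n$.
   Context: $\Omega_n=\{v_0,\dots,v_{n-1}\}$ with cyclic order $v_0<\dots<v_{n-1}<v_0$, indices mod $n$. For distinct vertices $u,w$, $(u,w)$ is the set of vertices strictly between $u$ and $w$ moving clockwise from $u$ to $w$, and $[u,w]=(u,w)\cup\{u,w\}$. A tuple $C=(w_1,\dots,w_{2m+1})$ of distinct vertices is semi-valid if $w_1<w_3<\dots<w_{2m+1}<w_2<w_4<\dots<w_{2m}<w_1$ in clockwise cyclic order; indices of the $w$'s mod $2m+1$. $H_n^{(r)}(C)=\{e\in\binom{\Omega_n}{r}: e\cap[w_p,w_{p-1}]\neq\emptyset\ \forall p\in\{1,\dots,2m+1\}\}$. *)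

From mathcomp Require Import all_boot.
Set Implicit Arguments. Unset Strict Implicit. Unset Printing Implicit Defensive.

(* Vertices of Omega_n are the ordinals 'I_n; v_i is the ordinal i.
   Clockwise order is increasing index mod n. *)

Definition cdist (n : nat) (u v : 'I_n) : nat := (v + n - u) %% n.

Definition carc (n : nat) (u w : 'I_n) : {set 'I_n} :=
  [set v : 'I_n | cdist u v <= cdist u w].

(* A tuple (w_1,...,w_{2m+1}) is a function w : 'I_(2m+1) -> 'I_n,
   w_{i+1} = w i. *)

(* the sequence (w_1, w_3, ..., w_{2m+1}, w_2, w_4, ..., w_{2m}) as indices *)
Definition semi_order (n m : nat) (w : 'I_(m.*2.+1) -> 'I_n) : seq nat :=
  [seq val (w (inord (i.*2))) | i <- iota 0 m.+1] ++
  [seq val (w (inord (i.*2.+1))) | i <- iota 0 m].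

(* a sequence of vertices is in (strict) clockwise cyclic order iff some
   rotation of it is strictly increasing *)
Definition cyclically_increasing (s : seq nat) : Prop :=
  exists j : nat, sorted ltn (rot j s).

Definition semi_valid (n m : nat) (w : 'I_(m.*2.+1) -> 'I_n) : Prop :=
  injective w /\ cyclically_increasing (semi_order w).

Definition prev_idx (m : nat) (p : 'I_(m.*2.+1)) : 'I_(m.*2.+1) :=
  if val p == 0 then ord_max else inord (val p).-1.

Definition Hgraph (n r m : nat) (w : 'I_(m.*2.+1) -> 'I_n) : {set {set 'I_n}} :=
  [set e : {set 'I_n} | (#|e| == r) &&
     [forall p : 'I_(m.*2.+1), e :&: carc (w p) (w (prev_idx p)) != set0]].

From mathcomp Require Import all_boot zify.
Set Implicit Arguments. Unset Strict Implicit. Unset Printing Implicit Defensive.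

(* Proposition 3.10.  For l >= 1, r >= 3 and n >= max(3r - 5, 2l + 3), the
   minimum of |H_n^(r)(C)| over semi-valid C of length 2l + 1 is smaller than
   over semi-valid C' of length 2l + 3: we take for C the 2l + 1 consecutive
   vertices 0, ..., 2l and show |H(C)| < |H(C')| for every C'.

   Read clockwise, a semi-valid tuple of length k = 2m + 1 is u_0 < ... < u_2m
   and its arcs [w_p, w_(p-1)] are the blocks B_x = [u_x, u_(x+m)], indices
   mod k.  We lift the u_x to an increasing A : nat -> nat with
   A (x + k) = A x + n.  An r-set missing some block "leaves" at exactly one
   x (it meets B_x but misses B_(x+1)), and B_x :|: B_(x+1) is the complement
   of the inside of B_(x+m+1); by inclusion-exclusion, with the gaps
   g_x = A (x + m) - A x,
       |H| + sum_x C(n - 1 - g_x, r) = C(n, r) + sum_x C(g_x - 1, r).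
   For the consecutive configuration this is an exact count.  In general
   g_x >= m, g_x + g_(x+m) < n and sum_x g_x = m n; writing
   C(n - 1 - g, r) - C(g - 1, r) as a sum of its U-shaped increments rho, an
   Abel-summation (majorization) argument shows that the consecutive
   configuration maximises the sum, which bounds |H(C')| from below.  Comparing
   the exact value for m = l with this bound for m = l + 1 reduces, through
   second differences of binomials, to C(l - 1, r - 2) < C(n - l - 3, r - 2). *)

Lemma exists_switch (P : nat -> bool) a j :
  ~~ P a -> P (a + j) -> exists y, ~~ P y && P y.+1.
Proof.
elim: j a => [|j IH] a; first by rewrite addn0 => /negPf ->.
move=> Pa; case: (boolP (P a.+1)) => [Pa1|nPa1]; first by exists a; rewrite Pa Pa1.
by rewrite -addSnnS; apply: IH.
Qed.

Lemma periodic_sum_shift k (g : nat -> nat) s : (forall x, g (x + k.+1) = g x) ->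
  \sum_(t < k.+1) g (t + s) = \sum_(t < k.+1) g t.
Proof.
move=> g_per; elim: s => [|s IH]; first by apply: eq_bigr => t _; rewrite addn0.
rewrite -IH big_ord_recr big_ord_recl /= addnC.
have -> : k + s.+1 = 0 + s + k.+1 by lia.
rewrite g_per; congr (_ + _); apply: eq_bigr => t _.
by rewrite /bump /= add1n addSnnS.
Qed.

Lemma sum_ltn_indicator a b x : a <= b -> \sum_(a <= y < b) (y < x) = minn x b - a.
Proof.
elim: b => [|b IH] ab; first by rewrite big_geq //; lia.
case: (ltngtP a b.+1) => [ab1|ba|<-]; [|lia|by rewrite big_geq //; lia].
rewrite big_nat_recr //= IH //; case: (ltnP b x) => bx; lia.
Qed.

Lemma sum_pairs q (h : nat -> nat) :
  \sum_(t < q.*2.+1) h t = h 0 + \sum_(i < q) (h i.+1 + h (i.+1 + q)).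
Proof.
rewrite big_ord_recl -addnn big_split_ord big_split /=; congr (_ + (_ + _)).
by apply: eq_bigr => i _; rewrite /= addSn addnC.
Qed.

(* Abel summation against a weight that is symmetric on the window
   [q, N - q) and decreases towards its middle: if [f] has the same total as
   [g] on the window but no more mass than [g] on every strictly inner
   subwindow [a, N - a), then [f] sits further out and has the larger
   weighted sum. *)
Section Majorization.
Variables (N q : nat) (rho f g : nat -> nat).
Hypotheses (rho_sym : forall a, q <= a -> a < N.-1 - a -> rho (N.-1 - a) = rho a)
  (rho_mono : forall a, q <= a -> a.+1 < N - a.+1 -> rho a.+1 <= rho a)
  (inner : forall a, q < a -> \sum_(a <= y < N - a) f y <= \sum_(a <= y < N - a) g y).

(* The arithmetic of one shell: [wa] and [wa1] are the weights at [a] and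
   [a + 1], [ga], [gb], [fa], [fb] the values at the two ends [a] and
   [N - 1 - a], and [P*], [S*] the weighted and plain sums inside. *)
Lemma shell_step (wa wa1 ga gb fa fb Pg Pf Sf Sg : nat) :
  Sf <= Sg -> wa1 <= wa -> Pg + wa1 * Sf <= Pf + wa1 * Sg ->
  wa * ga + (Pg + wa * gb) + wa * (fa + (Sf + fb)) <=
  wa * fa + (Pf + wa * fb) + wa * (ga + (Sg + gb)).
Proof.
move=> SfSg wa1wa IH.
have : wa1 * (Sg - Sf) <= wa * (Sg - Sf) by apply: leq_mul.
rewrite !mulnBr => w_le.
have := leq_mul (leqnn wa) SfSg; have := leq_mul (leqnn wa1) SfSg.
rewrite !mulnDr; lia.
Qed.

(* Induction on the width of the window, peeling off its two ends, which
   carry the same weight [rho a]. *)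
Lemma majorization_shells d a : q <= a -> N - a - a <= d ->
  \sum_(a <= y < N - a) rho y * g y + rho a * \sum_(a <= y < N - a) f y <=
  \sum_(a <= y < N - a) rho y * f y + rho a * \sum_(a <= y < N - a) g y.
Proof.
elim: d a => [|d IH] a qa width.
  by rewrite !(@big_geq _ _ _ a (N - a)) //; lia.
case: (ltngtP (N - a) a.+1) => [Na|aN|->]; last by rewrite !big_nat1 addnC.
  by rewrite !(@big_geq _ _ _ a (N - a)).
have ends : N - a = (N - a.+1).+1 by lia.
have last_eq : N - a.+1 = N.-1 - a by lia.
have a_lt : a < (N - a.+1).+1 by lia.
have a1_le : a.+1 <= N - a.+1 by lia.
rewrite ends !(big_ltn a_lt) !(big_nat_recr _ _ _ a1_le) /=.
rewrite last_eq (rho_sym qa) -?last_eq; last by lia.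
have width1 : N - a.+1 - a.+1 <= d by lia.
have IH1 := IH a.+1 (leqW qa) width1.
case: (ltnP a.+1 (N - a.+1)) => inside.
  apply: shell_step; [apply: inner; lia | exact: rho_mono qa inside | exact: IH1].
by rewrite !(@big_geq _ _ _ a.+1 (N - a.+1)) //; apply: (@shell_step _ 0).
Qed.

Lemma majorization :
  \sum_(q <= y < N - q) f y = \sum_(q <= y < N - q) g y ->
  \sum_(q <= y < N - q) rho y * g y <= \sum_(q <= y < N - q) rho y * f y.
Proof.
move=> total; have := @majorization_shells (N - q - q) q (leqnn q) (leqnn _).
by rewrite total leq_add2r.
Qed.

End Majorization.

Section Arcs.
Variable n : nat.
Implicit Types a b c u v : 'I_n.

Lemma cdistE u v : cdist u v = if u <= v then v - u else v + n - u.
Proof.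
rewrite /cdist; have := ltn_ord u; have := ltn_ord v => vn un.
case: leqP => uv; last by rewrite modn_small //; lia.
have -> : v + n - u = (v - u) + n by lia.
by rewrite modnDr modn_small //; lia.
Qed.

Lemma cdist_lt u v : cdist u v < n.
Proof. rewrite cdistE; have := ltn_ord u; have := ltn_ord v; case: ifP; lia. Qed.

Lemma cdist_triangle a b c : cdist a c <= cdist a b + cdist b c.
Proof.
rewrite !cdistE; have := ltn_ord a; have := ltn_ord b; have := ltn_ord c.
by repeat case: ifP; lia.
Qed.

Lemma cdist_via a b v : cdist a b <= cdist a v -> cdist a v = cdist a b + cdist b v.
Proof.
rewrite !cdistE; have := ltn_ord a; have := ltn_ord b; have := ltn_ord v.
by repeat case: ifP; lia.
Qed.

Lemma cdist_inj a : injective (cdist a).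
Proof.
move=> u v; rewrite !cdistE => uv; apply/val_inj => /=; move: uv.
have := ltn_ord a; have := ltn_ord u; have := ltn_ord v.
by repeat case: ifP; lia.
Qed.

Lemma card_carc a b : #|carc a b| = (cdist a b).+1.
Proof.
pose f v : 'I_n := Ordinal (cdist_lt a v).
have f_inj : injective f by move=> u v /(congr1 val) /cdist_inj.
have -> : carc a b = f @^-1: [set i : 'I_n | i < (cdist a b).+1].
  by apply/setP => v; rewrite !inE.
rewrite card_preimset // -sum1_card big_mkcond /=.
rewrite (eq_bigr (fun i : 'I_n => nat_of_bool (i < (cdist a b).+1))); last first.
  by move=> i _; rewrite inE; case: ifP.
rewrite -(big_mkord xpredT (fun i => nat_of_bool (i < (cdist a b).+1))).
by rewrite sum_ltn_indicator //; have := cdist_lt a b; lia.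
Qed.

Lemma card_compl_carc a b : #|~: carc a b| = n - (cdist a b).+1.
Proof. by rewrite cardsCs setCK card_ord card_carc. Qed.

End Arcs.

Lemma mod_dist a b n : 0 < n -> a <= b -> b < a + n ->
  ((b %% n) + n - (a %% n)) %% n = b - a.
Proof.
move=> n_gt0 ab ban.
have ea := divn_eq a n; have eb := divn_eq b n.
have ra := ltn_pmod a n_gt0; have rb := ltn_pmod b n_gt0.
have qab : a %/ n <= b %/ n by rewrite leq_div2r.
case: (leqP (a %% n) (b %% n)) => r_ab.
  have -> : b %% n + n - a %% n = (b %% n - a %% n) + n by lia.
  rewrite modnDr modn_small; last by lia.
  have : b %/ n <= a %/ n by nia.
  nia.
rewrite modn_small; last by lia.
have : b %/ n = (a %/ n).+1 by nia.
nia.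
Qed.

(* A cyclically ordered k-tuple of vertices (k = 2m + 1), unrolled: vertex
   [x] sits at position [A x mod n], and going once around the cycle advances
   the index by [k] and the position by [n]. *)
Section PeriodicLift.
Variables (n m : nat) (A : nat -> nat).
Hypotheses (n_gt0 : 0 < n) (m_gt0 : 0 < m).
Hypotheses (A_incr : forall x, A x < A x.+1)
  (A_period : forall x, A (x + m.*2.+1) = A x + n).
Local Notation k := m.*2.+1.

Lemma A_mono x y : x <= y -> A x <= A y.
Proof. exact: (homo_leq leqnn leq_trans (fun i => ltnW (A_incr i))). Qed.

Lemma A_spread x i : A x + i <= A (x + i).
Proof.
elim: i => [|i IH]; first by rewrite !addn0.
by rewrite !addnS; have := A_incr (x + i); lia.
Qed.

Lemma A_shift x s : A (x + s * k) = A x + s * n.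
Proof.
elim: s x => [|s IH] x; first by rewrite !mul0n !addn0.
by rewrite mulSn addnA IH A_period; lia.
Qed.

Lemma A_window x i : i < k -> A (x + i) < A x + n.
Proof.
move=> ik; rewrite -A_period.
by apply: (homo_ltn ltn_trans A_incr); lia.
Qed.

Definition vtx x : 'I_n := Ordinal (ltn_pmod (A x) n_gt0).

Lemma cdist_vtx x i : i < k -> cdist (vtx x) (vtx (x + i)) = A (x + i) - A x.
Proof.
move=> ik; apply: mod_dist => //; first by apply: A_mono; lia.
exact: A_window.
Qed.

Lemma vtx_shift x s : vtx (x + s * k) = vtx x.
Proof. by apply/val_inj => /=; rewrite A_shift addnC modnMDl. Qed.

Definition block x := carc (vtx x) (vtx (x + m)).

Lemma block_shift x s : block (x + s * k) = block x.
Proof. by rewrite /block vtx_shift addnAC vtx_shift. Qed.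

Lemma block_mod x : block (x %% k) = block x.
Proof. by rewrite -(block_shift (x %% k) (x %/ k)) addnC -divn_eq. Qed.

Lemma block_modS x : block (x %% k).+1 = block x.+1.
Proof. by rewrite -block_mod -addn1 modnDml addn1 block_mod. Qed.

Definition gap x := A (x + m) - A x.

Lemma gap_shift x : gap (x + k) = gap x.
Proof. by rewrite /gap addnAC !A_period; lia. Qed.

Lemma gap_lt x : gap x < n.
Proof. by rewrite /gap; have := A_window x (_ : m < k); lia. Qed.

Lemma cdist_block x : cdist (vtx x) (vtx (x + m)) = gap x.
Proof. by apply: cdist_vtx; lia. Qed.

Lemma block_cover v : exists t, v \in block t.
Proof.
pose c := cdist (vtx 0) v.
have [y /andP [yc yc1]] : exists y, ~~ (c < A y - A 0) && (c < A y.+1 - A 0).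
  apply: (@exists_switch (fun y => c < A y - A 0) 0 k); first by rewrite subnn.
  by rewrite add0n -[k]add0n A_period; have := cdist_lt (vtx 0) v; lia.
rewrite -leqNgt in yc.
have yk : y < k.
  rewrite ltnNge; apply/negP => ky.
  by have := A_mono ky; rewrite -[k]add0n A_period; have := cdist_lt (vtx 0) v; lia.
have e0 := cdist_vtx 0 yk; rewrite add0n in e0.
have ec : c = cdist (vtx 0) (vtx y) + cdist (vtx y) v by apply: cdist_via; rewrite e0.
exists y; rewrite inE cdist_block /gap.
by have := A_mono (_ : y.+1 <= y + m); have := A_incr y; lia.
Qed.

Lemma step_sub_block x i : i < m -> carc (vtx (x + i)) (vtx (x + i).+1) \subset block x.
Proof.
move=> im; apply/subsetP => v; rewrite !inE cdist_block /gap => hv.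
have e1 : cdist (vtx x) (vtx (x + i)) = A (x + i) - A x by apply: cdist_vtx; lia.
have e2 : cdist (vtx (x + i)) (vtx (x + i + 1)) = A (x + i + 1) - A (x + i).
  by apply: cdist_vtx; lia.
rewrite addn1 in e2; rewrite e2 in hv.
have := cdist_triangle (vtx x) (vtx (x + i)) v.
have := A_mono (_ : x <= x + i); have := A_mono (_ : (x + i).+1 <= x + m).
have := A_incr (x + i); lia.
Qed.

Lemma blockU x : block x :|: block x.+1 = carc (vtx x) (vtx (x + m.+1)).
Proof.
have e1 : cdist (vtx x) (vtx (x + 1)) = A (x + 1) - A x by apply: cdist_vtx; lia.
have e5 : cdist (vtx x) (vtx (x + m.+1)) = A (x + m.+1) - A x by apply: cdist_vtx; lia.
rewrite addn1 in e1.
have := A_incr x; have := A_mono (_ : x + m <= x + m.+1).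
have := A_mono (_ : x.+1 <= x + m) => step_pos end_mono inner_mono.
apply/setP => v; rewrite !inE !cdist_block /gap e5 addSnnS.
have tri := cdist_triangle (vtx x) (vtx x.+1) v.
apply/idP/idP; first by case/orP; lia.
case: (leqP (cdist (vtx x) v) (A x.+1 - A x)) => [vx|xv vm]; first by lia.
by have := @cdist_via _ (vtx x) (vtx x.+1) v; rewrite e1 => /(_ (ltnW xv)); lia.
Qed.

Lemma block_sub_step x : block x \subset carc (vtx x) (vtx x.+1) :|: block x.+1.
Proof.
apply/subsetP => v; rewrite !inE !cdist_block /gap => v_in.
have e1 : cdist (vtx x) (vtx (x + 1)) = A (x + 1) - A x by apply: cdist_vtx; lia.
rewrite addn1 in e1; rewrite e1.
case: (leqP (cdist (vtx x) v) (A x.+1 - A x)) => // xv.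
have := @cdist_via _ (vtx x) (vtx x.+1) v; rewrite e1 => /(_ (ltnW xv)).
have := A_mono (_ : x + m <= x.+1 + m); have := A_incr x; lia.
Qed.

(* The part of the cycle not covered by blocks [x] and [x+1] is the inside
   of block [x + m + 1]. *)
Lemma cdist_blockU x : cdist (vtx x) (vtx (x + m.+1)) = n - gap (x + m.+1).
Proof.
rewrite cdist_vtx; last by lia.
rewrite /gap (_ : x + m.+1 + m = x + k); last by lia.
rewrite A_period.
by have := A_mono (_ : x <= x + m.+1); have := A_window x (_ : m.+1 < k); lia.
Qed.

Section Counting.
Variable r : nat.
Hypothesis r_gt0 : 0 < r.

Definition hitting : {set {set 'I_n}} :=
  [set e : {set 'I_n} | (#|e| == r) && [forall x : 'I_k, e :&: block x != set0]].
Definition missing : {set {set 'I_n}} :=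
  [set e : {set 'I_n} | (#|e| == r) && [exists x : 'I_k, e :&: block x == set0]].

Lemma card_hitting_missing : #|hitting| + #|missing| = 'C(n, r).
Proof.
set D := [set e : {set 'I_n} | #|e| == r].
have -> : missing = D :\: hitting.
  apply/setP => e; rewrite !inE; case: (#|e| == r) => //=.
  by rewrite negb_forall andbT; apply: eq_existsb => x; rewrite negbK.
have hD : hitting \subset D by apply/subsetP => e; rewrite !inE => /andP[->].
by rewrite cardsDS // subnKC ?subset_leq_card // /D card_draws card_ord.
Qed.

Definition leaving t : {set {set 'I_n}} :=
  [set e : {set 'I_n} | [&& #|e| == r, e :&: block t.+1 == set0 & e :&: block t != set0]].

Lemma meets_sub (e X Y : {set 'I_n}) : X \subset Y -> e :&: X != set0 -> e :&: Y != set0.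
Proof. by move=> XY; apply: contraNneq => eY; rewrite -subset0 -eY setIS. Qed.

Lemma leaving_meets_step t e : e \in leaving t -> e :&: carc (vtx t) (vtx t.+1) != set0.
Proof.
rewrite inE => /and3P [_ /eqP miss meet].
by have := meets_sub (block_sub_step t) meet; rewrite setIUr miss setU0.
Qed.

(* The first step of block [t] lies inside block [t' + 1] for every other
   position [t'], so a set cannot leave at two positions. *)
Lemma leaving_disj (t t' : 'I_k) e : e \in leaving t -> e \in leaving t' -> t' < t -> False.
Proof.
move=> et et' t't.
have meet := leaving_meets_step et; have meet' := leaving_meets_step et'.
move: et et'; rewrite !inE => /and3P [_ /eqP miss _] /and3P [_ /eqP miss' _].
have tk := ltn_ord t.
case: (leqP (t - t') m) => tt'.
  have i_m : t - t' - 1 < m by lia.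
  have := step_sub_block t'.+1 i_m; rewrite (_ : t'.+1 + _ = t); last by lia.
  by move=> /meets_sub/(_ meet); rewrite miss' eqxx.
have i_m : m.*2 - (t - t') < m by lia.
have := step_sub_block t.+1 i_m; rewrite (_ : t.+1 + _ = t' + 1 * k); last by lia.
by rewrite -addSn !vtx_shift => /meets_sub/(_ meet'); rewrite miss eqxx.
Qed.

(* Walking around the cycle from a block that a set meets to one it misses
   finds a position where it leaves. *)
Lemma missing_leaving e : e \in missing -> exists t : 'I_k, e \in leaving t.
Proof.
rewrite inE => /andP [er /existsP [x0 miss0]].
have : 0 < #|e| by rewrite (eqP er).
rewrite card_gt0 => /set0Pn [v ve]; have [t0 vt0] := block_cover v.
have [y /andP [meet miss]] : exists y, ~~ (e :&: block y == set0) && (e :&: block y.+1 == set0).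
  apply: (@exists_switch (fun y => e :&: block y == set0) t0 (x0 + t0 * k - t0)).
    by apply/set0Pn; exists v; rewrite inE ve vt0.
  by rewrite (_ : t0 + _ = x0 + t0 * k) ?block_shift //; nia.
exists (Ordinal (ltn_pmod y (ltn0Sn m.*2))).
by rewrite inE /= er block_mod block_modS meet miss.
Qed.

Lemma card_missing : #|missing| = \sum_(t < k) #|leaving t|.
Proof.
rewrite -sum1_card (eq_bigr (fun t : 'I_k => \sum_e (e \in leaving t) : nat)); last first.
  by move=> t _; rewrite -sum1_card big_mkcond; apply: eq_bigr => e _; case: (e \in _).
rewrite exchange_big big_mkcond /=; apply: eq_bigr => e _.
case: (boolP (e \in missing)) => [e_miss|e_nmiss].
  have [t0 et0] := missing_leaving e_miss.
  rewrite (bigD1 t0) //= et0 big1 // => t tt0; apply/eqP; rewrite eqb0; apply/negP => et.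
  case/negP: tt0; apply/eqP; case: (ltngtP t t0) => [tt0|t0t|/val_inj //].
    by case: (leaving_disj et0 et tt0).
  by case: (leaving_disj et et0 t0t).
rewrite big1 // => t _; apply/eqP; rewrite eqb0; apply: contra e_nmiss => et.
move: et; rewrite !inE => /and3P [-> miss _] /=; apply/existsP.
by exists (Ordinal (ltn_pmod t.+1 (ltn0Sn m.*2))); rewrite /= block_mod.
Qed.

(* Inclusion-exclusion: leaving at [t] = avoiding block [t+1], but not
   avoiding the union of blocks [t] and [t+1]. *)
Lemma card_leaving t : #|leaving t| + 'C((gap (t + m.+1)).-1, r) = 'C(n.-1 - gap t.+1, r).
Proof.
have avoid (X e : {set 'I_n}) : (e \subset ~: X) = (e :&: X == set0).
  by rewrite -disjoints_subset setI_eq0.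
set D1 := [set e : {set 'I_n} | e \subset ~: block t.+1 & #|e| == r].
set D2 := [set e : {set 'I_n} | e \subset ~: (block t :|: block t.+1) & #|e| == r].
have -> : leaving t = D1 :\: D2.
  apply/setP => e; rewrite !inE !avoid setIUr setU_eq0.
  by case: (#|e| == r); case: (e :&: block t == set0); case: (e :&: block t.+1 == set0).
have D21 : D2 \subset D1.
  by apply/subsetP => e; rewrite !inE !avoid setIUr setU_eq0 => /andP [/andP [_ ->] ->].
have gap_pos : 0 < gap (t + m.+1) by rewrite /gap; have := A_spread (t + m.+1) m; lia.
have card_D1 : #|D1| = 'C(n.-1 - gap t.+1, r).
  by rewrite /D1 cards_draws card_compl_carc cdist_block; congr 'C(_, _); lia.
have card_D2 : #|D2| = 'C((gap (t + m.+1)).-1, r).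
  rewrite /D2 cards_draws blockU card_compl_carc cdist_blockU; congr 'C(_, _).
  by have := gap_lt (t + m.+1); lia.
by rewrite cardsDS // -card_D1 -card_D2 subnK ?subset_leq_card.
Qed.

Lemma card_hitting_gaps :
  #|hitting| + \sum_(t < k) 'C(n.-1 - gap t, r) = 'C(n, r) + \sum_(t < k) 'C((gap t).-1, r).
Proof.
have shift s (f : nat -> nat) : \sum_(t < k) 'C(f (gap (t + s)), r) = \sum_(t < k) 'C(f (gap t), r).
  by apply: (@periodic_sum_shift m.*2 (fun t => 'C(f (gap t), r))) => x; rewrite gap_shift.
rewrite -(shift 1 (fun g => n.-1 - g)) -card_hitting_missing card_missing.
rewrite -(shift m.+1 predn) -addnA -big_split /=; congr (_ + _); apply: eq_bigr => t _.
by rewrite addn1 -card_leaving.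
Qed.

End Counting.

(* Bounds on the gaps: each block spans [m + 1] vertices, two blocks
   [t] and [t + m] are disjoint, and every vertex step is counted in exactly
   [m] gaps. *)
Lemma gap_ge t : m <= gap t.
Proof. by rewrite /gap; have := A_spread t m; lia. Qed.

Lemma gap_le t : gap t + m.+1 <= n.
Proof.
rewrite /gap; have := A_spread (t + m) m.+1; have := A_period t.
by have := A_mono (_ : t <= t + m); rewrite (_ : t + m + m.+1 = t + k); lia.
Qed.

Lemma gap_pair t : gap t + gap (t + m) < n.
Proof.
rewrite /gap; have := A_period t; have := A_incr (t + m + m).
have := A_mono (_ : t <= t + m); have := A_mono (_ : t + m <= t + m + m).
by rewrite (_ : (t + m + m).+1 = t + k); lia.
Qed.

Lemma gap_sum : \sum_(t < k) gap t = m * n.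
Proof.
pose step y := A y.+1 - A y.
have gap_steps t : gap t = \sum_(i < m) step (t + i).
  rewrite /gap -(telescope_sumn t (t + m) A_mono) -{1}[t]add0n big_addn addKn.
  by rewrite big_mkord; apply: eq_bigr => i _; rewrite addnC.
rewrite (eq_bigr (fun t : 'I_k => \sum_(i < m) step (t + i))) => [|t _]; last exact: gap_steps.
rewrite exchange_big /=.
rewrite (eq_bigr (fun _ => n)) => [|i _]; first by rewrite sum_nat_const card_ord mulnC.
rewrite (periodic_sum_shift (k := m.*2) (g := step)); last first.
  by move=> x; rewrite /step -addSn !A_period; lia.
rewrite -(big_mkord xpredT step) (telescope_sumn 0 k A_mono) -[k]add0n A_period; lia.
Qed.

Lemma k_le_n : k <= n.
Proof. by have := A_spread 0 k; rewrite A_period; lia. Qed.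

Section LowerBound.
Variable r : nat.
Hypothesis r_gt1 : 1 < r.

(* [rho y] is the decrease of [C(n - 1 - y, r) - C(y - 1, r)] from [y] to
   [y + 1]; it is symmetric about the middle of the cycle and U-shaped. *)
Definition rho y := 'C(n.-1 - y.+1, r.-1) + 'C(y.-1, r.-1).
Definition rho_sum x := \sum_(m <= y < x) rho y.

(* How many gaps exceed [y], and the same count for the configuration with
   [m + 1] gaps equal to [m] and [m] gaps equal to [n - m - 1]. *)
Definition above y := \sum_(t < k) (y < gap t).
Definition above_extremal y := m * (y < n - m.+1).

Lemma rho_sym a : m <= a -> a < n.-1 - a -> rho (n.-1 - a) = rho a.
Proof. by move=> ma an; rewrite /rho addnC; congr ('C(_, _) + 'C(_, _)); lia. Qed.

Lemma rho_mono a : m <= a -> a.+1 < n - a.+1 -> rho a.+1 <= rho a.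
Proof.
move=> ma an; rewrite /rho; case: r r_gt1 => [|[|r']] // _ /=.
have -> : 'C(n.-1 - a.+1, r'.+1) = 'C(n.-1 - a.+2, r'.+1) + 'C(n.-1 - a.+2, r').
  by rewrite -binS; congr 'C(_, _); lia.
have -> : 'C(a, r'.+1) = 'C(a.-1, r'.+1) + 'C(a.-1, r').
  by rewrite -binS; congr 'C(_, _); lia.
have : 'C(a.-1, r') <= 'C(n.-1 - a.+2, r') by apply: leq_bin2l; lia.
lia.
Qed.

Lemma above_window a : a <= n - a ->
  \sum_(a <= y < n - a) above y = \sum_(t < k) (minn (gap t) (n - a) - a).
Proof.
move=> an; rewrite /above exchange_big /=.
by apply: eq_bigr => t _; apply: sum_ltn_indicator.
Qed.

(* On an inner window [a, n - a), the gaps have no more mass than in the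
   extremal configuration: either some gap is at most [a], and the remaining
   gaps pair up as [t], [t + m] with total below [n], or all gaps exceed [a]
   and the total [m n] leaves little room. *)
Lemma above_inner a : m < a ->
  \sum_(a <= y < n - a) above y <= \sum_(a <= y < n - a) above_extremal y.
Proof.
move=> ma; case: (leqP (n - a) a) => [na|an]; first by rewrite !big_geq.
have -> : \sum_(a <= y < n - a) above_extremal y = (n - a - a) * m.
  rewrite -sum_nat_const_nat; apply: eq_big_nat => y /andP [ay yn].
  by rewrite /above_extremal (_ : y < n - m.+1) ?muln1 //; lia.
rewrite above_window; last by lia.
case: (boolP [exists t : 'I_k, gap t <= a]) => [/existsP [t0 t0a]|].
  pose g x := minn (gap x) (n - a) - a.
  have g_per x : g (x + k) = g x by rewrite /g gap_shift.
  rewrite -(periodic_sum_shift t0 g_per) (sum_pairs m (fun t => g (t + t0))).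
  rewrite /g add0n (_ : _ - a = 0) ?add0n; last by lia.
  rewrite mulnC -[m in m * _]card_ord -sum_nat_const; apply: leq_sum => i _.
  by have := gap_pair (i.+1 + t0); rewrite (_ : i.+1 + t0 + m = i.+1 + m + t0); lia.
rewrite negb_exists => /forallP gaps_big.
have : \sum_(t < k) (minn (gap t) (n - a) - a) + k * a <= m * n.
  rewrite -gap_sum -[k in k * a]card_ord -sum_nat_const -big_split /=.
  by apply: leq_sum => t _; have := gaps_big t; rewrite -ltnNge; lia.
set S := \sum_(t < k) _; clear; nia.
Qed.

Lemma above_total :
  \sum_(m <= y < n - m) above y = \sum_(m <= y < n - m) above_extremal y.
Proof.
have kn := k_le_n.
have -> : \sum_(m <= y < n - m) above_extremal y = m * (n - m.+1 - m).
  rewrite /above_extremal -big_distrr /= sum_ltn_indicator; last by lia.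
  by congr (_ * _); lia.
rewrite above_window; last by lia.
have : \sum_(t < k) (minn (gap t) (n - m) - m) + k * m = m * n.
  rewrite -gap_sum -[k in k * m]card_ord -sum_nat_const -big_split /=.
  by apply: eq_bigr => t _; have := gap_ge t; have := gap_le t; lia.
set S := \sum_(t < k) _; clear -kn; nia.
Qed.

Lemma sum_rho_below x : m <= x -> x <= n - m ->
  \sum_(m <= y < n - m) rho y * (y < x) = rho_sum x.
Proof.
move=> mx xn; rewrite (big_cat_nat mx xn) /= [X in _ + X]big1_seq => [|y].
  by rewrite addn0; apply: eq_big_nat => y /andP [_ ->]; rewrite muln1.
by move=> /andP [_]; rewrite mem_index_iota => /andP [xy _]; rewrite ltnNge xy muln0.
Qed.

Lemma rho_sum_layers : m * rho_sum (n - m.+1) <= \sum_(t < k) rho_sum (gap t).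
Proof.
have kn := k_le_n.
have := majorization rho_sym rho_mono above_inner above_total.
have -> : \sum_(m <= y < n - m) rho y * above_extremal y = m * rho_sum (n - m.+1).
  rewrite -sum_rho_below; try lia.
  by rewrite big_distrr /=; apply: eq_bigr => y _; rewrite /above_extremal; lia.
have -> // : \sum_(m <= y < n - m) rho y * above y = \sum_(t < k) rho_sum (gap t).
rewrite /above; under eq_bigr => y _ do rewrite big_distrr.
rewrite exchange_big /=; apply: eq_bigr => t _.
by rewrite sum_rho_below ?gap_ge //; have := gap_le t; lia.
Qed.

Lemma rho_telescope x : m <= x -> x <= n - m.+1 ->
  'C(n.-1 - x, r) + rho_sum x + 'C(m.-1, r) = 'C(n.-1 - m, r) + 'C(x.-1, r).
Proof.
move=> mx; rewrite -(subnK mx); elim: (x - m) => [|i IH] xn.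
  by rewrite add0n /rho_sum big_geq //; lia.
have IH' := IH (ltnW xn).
rewrite /rho_sum addSn big_nat_recr /= -/(rho_sum (i + m)); last by lia.
have kn := k_le_n; move: IH'; rewrite /rho; case: r r_gt1 => [|r'] // _.
have -> : 'C(n.-1 - (i + m), r'.+1) = 'C(n.-1 - (i + m).+1, r'.+1) + 'C(n.-1 - (i + m).+1, r').
  by rewrite -binS; congr 'C(_, _); lia.
have -> : 'C(i + m, r'.+1) = 'C((i + m).-1, r'.+1) + 'C((i + m).-1, r').
  by rewrite -binS; congr 'C(_, _); lia.
set R := rho_sum (i + m); simpl; lia.
Qed.

Lemma hitting_lower_bound :
  'C(n, r) + m.+1 * 'C(m.-1, r) + m * 'C(n - m.+2, r) <=
  #|hitting r| + m.+1 * 'C(n.-1 - m, r) + m * 'C(m, r).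
Proof.
have kn := k_le_n.
have count := card_hitting_gaps (ltnW r_gt1).
have per_gap : \sum_(t < k) ('C(n.-1 - gap t, r) + rho_sum (gap t) + 'C(m.-1, r)) =
               \sum_(t < k) ('C(n.-1 - m, r) + 'C((gap t).-1, r)).
  by apply: eq_bigr => t _; rewrite rho_telescope ?gap_ge //; have := gap_le t; lia.
rewrite !big_split /= !sum_nat_const card_ord in per_gap.
have m_le : m <= n - m.+1 by lia.
have extremal := rho_telescope m_le (leqnn _).
rewrite (_ : n.-1 - (n - m.+1) = m) in extremal; last by lia.
rewrite (_ : (n - m.+1).-1 = n - m.+2) in extremal; last by lia.
have := congr1 (muln m) extremal; rewrite !mulnDr.
move: count per_gap rho_sum_layers.
set S1 := \sum_(t < k) 'C(n.-1 - gap t, r).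
set S2 := \sum_(t < k) 'C((gap t).-1, r).
set S3 := \sum_(t < k) rho_sum (gap t).
set R0 := rho_sum (n - m.+1).
set H := #|hitting r|.
clear; lia.
Qed.

End LowerBound.

End PeriodicLift.

Lemma nth_rot_mod (s : seq nat) j t : j < size s -> t < size s ->
  nth 0 (rot j s) t = nth 0 s ((t + j) %% size s).
Proof.
move=> js ts; rewrite /rot nth_cat size_drop.
case: ltnP => tj; first by rewrite nth_drop modn_small; [congr nth; lia | lia].
rewrite nth_take; last by lia.
by rewrite (_ : t + j = (t - (size s - j)) + size s) ?modnDr ?modn_small //; lia.
Qed.

Lemma prev_idx_val m (p : 'I_(m.*2.+1)) : val (prev_idx p) = (p + m.*2) %% m.*2.+1.
Proof.
rewrite /prev_idx; case: eqP => [->|/eqP /= p0]; first by rewrite /= add0n modn_small.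
have pk := ltn_ord p; rewrite /= inordK; last by lia.
by rewrite (_ : p + m.*2 = p.-1 + m.*2.+1) ?modnDr ?modn_small //; lia.
Qed.

Lemma size_semi_order n m (w : 'I_(m.*2.+1) -> 'I_n) : size (semi_order w) = m.*2.+1.
Proof. by rewrite /semi_order size_cat !size_map !size_iota; lia. Qed.

Lemma nth_semi_order n m (w : 'I_(m.*2.+1) -> 'I_n) i : i < m.*2.+1 ->
  nth 0 (semi_order w) i = w (inord (i.*2 %% m.*2.+1)).
Proof.
move=> ik; rewrite /semi_order nth_cat size_map size_iota.
case: ltnP => im.
  by rewrite (nth_map 0) ?size_iota // nth_iota // add0n modn_small //; lia.
rewrite (nth_map 0) ?size_iota; last by lia.
rewrite nth_iota; last by lia.
rewrite (_ : i.*2 = (i - m.+1).*2.+1 + m.*2.+1) ?modnDr ?modn_small //; lia.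
Qed.

Lemma semi_valid_rot n m (w : 'I_(m.*2.+1) -> 'I_n) : semi_valid w ->
  exists2 j, j < m.*2.+1 & sorted ltn (rot j (semi_order w)).
Proof.
move=> [_ [j sorted_j]]; case: (ltnP j m.*2.+1) => jk; first by exists j.
by exists 0; rewrite // rot0; rewrite rot_oversize ?size_semi_order in sorted_j.
Qed.

(* A semi-valid tuple, listed clockwise from a rotation [j] of its semi-order,
   lifts to an increasing [A] with [A (x + k) = A x + n]; under this lift the
   arcs [w_p, w_(p-1)] are exactly the blocks, so [H_n^(r)] is the set of
   r-sets meeting all blocks. *)
Section SemiValidLift.
Variables (n m : nat) (w : 'I_(m.*2.+1) -> 'I_n) (j : nat).
Local Notation k := m.*2.+1.
Hypotheses (jk : j < k) (w_sorted : sorted ltn (rot j (semi_order w))) (n_gt0 : 0 < n).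

Definition clockwise t := nth 0 (rot j (semi_order w)) t.

Lemma clockwiseE t : t < k -> clockwise t = w (inord ((t + j).*2 %% k)).
Proof.
move=> tk; rewrite /clockwise nth_rot_mod ?size_semi_order // nth_semi_order ?ltn_pmod //.
by congr (nat_of_ord (w (inord _))); rewrite -!muln2 modnMml.
Qed.

Lemma clockwise_lt t : t < k -> clockwise t < n.
Proof. by move=> tk; rewrite clockwiseE. Qed.

Lemma clockwise_incr s t : s < t -> t < k -> clockwise s < clockwise t.
Proof.
move=> st tk; apply: (sorted_ltn_nth ltn_trans 0 w_sorted);
  by rewrite ?inE ?size_rot ?size_semi_order //; apply: ltn_trans tk.
Qed.

Definition unrolled x := clockwise (x %% k) + n * (x %/ k).

Lemma unrolledE q i : i < k -> unrolled (q * k + i) = clockwise i + n * q.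
Proof. by move=> ik; rewrite /unrolled modnMDl modn_small // divnMDl // divn_small //; lia. Qed.

Lemma unrolled_incr x : unrolled x < unrolled x.+1.
Proof.
rewrite (divn_eq x k); have ik := ltn_pmod x (ltn0Sn m.*2); rewrite unrolledE //.
case: (ltnP (x %% k).+1 k) => i1k.
  by rewrite -[(_ * k + _).+1]addnS unrolledE // ltn_add2r clockwise_incr.
rewrite (_ : (_ * k + _).+1 = (x %/ k).+1 * k + 0); last by rewrite mulSn; lia.
by rewrite unrolledE // mulnS; have := clockwise_lt ik; lia.
Qed.

Lemma unrolled_period x : unrolled (x + k) = unrolled x + n.
Proof.
rewrite (divn_eq x k) -addnA [_ + k]addnC addnA -mulSnr !unrolledE ?ltn_pmod //.
by rewrite mulnS; lia.
Qed.

Lemma vtx_unrolled x (p : 'I_k) : (x + j).*2 %% k = p -> vtx unrolled n_gt0 x = w p.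
Proof.
move=> xp; apply/val_inj; rewrite /= /unrolled [clockwise _ + _]addnC [n * _]mulnC modnMDl.
rewrite modn_small ?clockwise_lt ?ltn_pmod // clockwiseE ?ltn_pmod //.
have -> : (x %% k + j).*2 %% k = p by rewrite -xp -!muln2 -modnMml modnDml modnMml.
by rewrite inord_val.
Qed.

Lemma Hgraph_unrolled r (m_gt0 : 0 < m) : Hgraph r w = hitting m unrolled n_gt0 r.
Proof.
apply/setP => e; rewrite !inE; congr andb; apply/forallP/forallP.
  move=> meets x; have := meets (inord ((x + j).*2 %% k)).
  have px : nat_of_ord (inord ((x + j).*2 %% k) : 'I_k) = (x + j).*2 %% k.
    by rewrite inordK ?ltn_pmod.
  rewrite /block -(@vtx_unrolled x) // -(@vtx_unrolled (x + m)) // prev_idx_val px modnDml.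
  by congr (_ %% _); lia.
move=> meets p; pose x0 := m.+1 * p + k.-1 * j.
have := meets (Ordinal (ltn_pmod x0 (ltn0Sn m.*2))).
rewrite /= (block_mod n_gt0 m_gt0 unrolled_period) /block.
have e1 : (x0 + j).*2 = (p + j.*2) * k + p by rewrite /x0; lia.
have e2 : (x0 + m + j).*2 = (p + j.*2) * k + (p + m.*2) by rewrite /x0; lia.
rewrite (@vtx_unrolled x0 p); last by rewrite e1 modnMDl modn_small.
by rewrite (@vtx_unrolled (x0 + m) (prev_idx p)) // prev_idx_val e2 modnMDl.
Qed.

End SemiValidLift.

Lemma sum_two_values l (F : nat -> nat) a b :
  \sum_(t < l.*2.+1) F (if t <= l then a else b) = l.+1 * F a + l * F b.
Proof.
rewrite -(big_mkord xpredT (fun t => F (if t <= l then a else b))).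
rewrite (big_cat_nat (_ : 0 <= l.+1)) //=; last by lia.
rewrite (eq_big_nat _ _ (F2 := fun=> F a)) => [|t /andP [_ tl]]; last by rewrite ifT.
rewrite [X in _ + X](eq_big_nat _ _ (F2 := fun=> F b)) => [|t /andP [lt _]].
  by rewrite !sum_nat_const_nat; congr (_ * _ + _ * _); lia.
by rewrite ifF //; lia.
Qed.

(* The semi-valid tuple of 2l+1 consecutive vertices [0, 1, ..., 2l]:
   [w_(2i+1) = i] and [w_(2i+2) = l + 1 + i]. *)
Section Consecutive.
Variables (n l : nat).
Hypotheses (l_gt0 : 0 < l) (k_le_n : l.*2.+1 <= n).
Local Notation k := l.*2.+1.

Lemma consecutive_lt (p : 'I_k) : p./2 + odd p * l.+1 < n.
Proof. by have := odd_double_half p; have := ltn_ord p; case: (odd p) => /=; lia. Qed.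

Definition consecutive (p : 'I_k) : 'I_n := Ordinal (consecutive_lt p).

Lemma semi_order_consecutive : semi_order consecutive = iota 0 k.
Proof.
rewrite /semi_order.
have -> : [seq val (consecutive (inord (i.*2))) | i <- iota 0 l.+1] = iota 0 l.+1.
  rewrite -[RHS]map_id; apply/eq_in_map => i; rewrite mem_iota => /andP [_ il].
  by rewrite /= inordK ?odd_double ?doubleK /= ?addn0 //; lia.
have -> : [seq val (consecutive (inord (i.*2.+1))) | i <- iota 0 l] = iota l.+1 l.
  rewrite -[l.+1 in RHS]addn0 iotaDl; apply/eq_in_map => i; rewrite mem_iota => /andP [_ il].
  rewrite /= inordK; last by lia.
  by have := odd_double_half i.*2.+1; rewrite /= odd_double /=; lia.
by rewrite -iotaD; congr iota; lia.
Qed.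

Lemma semi_valid_consecutive : semi_valid consecutive.
Proof.
split; last by exists 0; rewrite rot0 semi_order_consecutive iota_ltn_sorted.
move=> p p' /(congr1 val) /=; have := odd_double_half p; have := odd_double_half p'.
move=> hp' hp pp'; apply/val_inj; move: hp hp' pp'.
by have := ltn_ord p; have := ltn_ord p'; case: (odd p); case: (odd p') => /=; lia.
Qed.

(* The exact count for the consecutive configuration: [l + 1] blocks have gap
   [l] and [l] blocks wrap around the cycle with gap [n - l - 1]. *)
Lemma card_Hgraph_consecutive r : 0 < r ->
  #|Hgraph r consecutive| + l.+1 * 'C(n.-1 - l, r) + l * 'C(l, r) =
  'C(n, r) + l.+1 * 'C(l.-1, r) + l * 'C(n - l.+2, r).
Proof.
move=> r_gt0; have n_gt0 : 0 < n by lia.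
have j0 : 0 < k by [].
have sorted0 : sorted ltn (rot 0 (semi_order consecutive)).
  by rewrite rot0 semi_order_consecutive iota_ltn_sorted.
have clock t : t < k -> clockwise consecutive 0 t = t.
  by move=> tk; rewrite /clockwise rot0 semi_order_consecutive nth_iota.
have gapE (t : 'I_k) :
  gap l (unrolled consecutive 0) t = if t <= l then l else n - l.+1.
  have := ltn_ord t; rewrite /gap; case: ifP => tl tk.
    by rewrite -[t + l]add0n -[t : nat]add0n -(mul0n k) !unrolledE ?clock //; lia.
  rewrite -[_ + l](_ : 1 * k + (t + l - k) = _); last by lia.
  by rewrite -[t : nat]add0n -(mul0n k) !unrolledE ?clock //; lia.
rewrite (Hgraph_unrolled j0 sorted0 n_gt0 r l_gt0).
have := card_hitting_gaps n_gt0 l_gt0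
  (unrolled_incr j0 sorted0 n_gt0) (unrolled_period j0 sorted0 n_gt0) r_gt0.
rewrite (eq_bigr (fun t : 'I_k => 'C(n.-1 - (if t <= l then l else n - l.+1), r)));
  last by move=> t _; rewrite gapE.
rewrite [X in _ = _ + X](eq_bigr (fun t : 'I_k => 'C((if t <= l then l else n - l.+1).-1, r)));
  last by move=> t _; rewrite gapE.
rewrite (sum_two_values l (fun g => 'C(n.-1 - g, r))) (sum_two_values l (fun g => 'C(g.-1, r))).
rewrite (_ : n.-1 - (n - l.+1) = l); last by lia.
rewrite (_ : (n - l.+1).-1 = n - l.+2); last by lia.
by rewrite !addnA.
Qed.

End Consecutive.

Lemma bin_second_diff x s :
  'C(x.+2, s.+2) + 'C(x, s.+2) = ('C(x.+1, s.+2)).*2 + 'C(x, s).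
Proof. by rewrite !binS -addnn; lia. Qed.

Lemma bin_ltn_mono a b c : 0 < c -> a < b -> c <= b -> 'C(a, c) < 'C(b, c).
Proof.
move=> c_gt0 ab cb; case: (ltnP a c) => ac; first by rewrite bin_small // bin_gt0.
case: c c_gt0 cb ac => [|c] // _ cb ac.
have := leq_bin2l c.+1 ab; rewrite binS; have : 0 < 'C(a, c) by rewrite bin_gt0; lia.
lia.
Qed.

(* Comparing the exact count for [2l + 1] consecutive vertices with the
   lower bound for tuples of length [2l + 3]: after cancellation this is
   [C(l - 1, r - 2) < C(n - l - 3, r - 2)]. *)
Lemma count_comparison n l r H1 H2 : 0 < l -> 2 < r -> l.*2 + 3 <= n -> r + l + 1 <= n ->
  H1 + l.+1 * 'C(n.-1 - l, r) + l * 'C(l, r) =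
    'C(n, r) + l.+1 * 'C(l.-1, r) + l * 'C(n - l.+2, r) ->
  'C(n, r) + l.+2 * 'C(l, r) + l.+1 * 'C(n - l.+3, r) <=
    H2 + l.+2 * 'C(n.-1 - l.+1, r) + l.+1 * 'C(l.+1, r) ->
  H1 < H2.
Proof.
move=> l_gt0 r_gt2; have [s er] : exists s, r = s.+2 by exists (r - 2); lia.
subst r.
case: l l_gt0 => [//|l] _ n_ge n_ge'; rewrite succnK; set M := n - l.+4.
rewrite (_ : n.-1 - l.+1 = M.+2); last by lia.
rewrite (_ : n - l.+3 = M.+1); last by lia.
rewrite (_ : n.-1 - l.+2 = M.+1); last by lia.
have := congr1 (muln l.+2) (bin_second_diff M s).
have := congr1 (muln l.+2) (bin_second_diff l s).
have : l.+2 * 'C(l, s) < l.+2 * 'C(M, s) by rewrite ltn_pmul2l //; apply: bin_ltn_mono; lia.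
rewrite -!addnn !mulnDr !mulSn; clear; lia.
Qed.

Theorem proposition3p10 (l r n : nat) :
  1 <= l -> 3 <= r -> maxn (3 * r - 5) (l.*2 + 3) <= n ->
  exists C : 'I_(l.*2.+1) -> 'I_n,
    semi_valid C /\
    forall C' : 'I_(l.+1.*2.+1) -> 'I_n,
      semi_valid C' -> #|Hgraph r C| < #|Hgraph r C'|.
Proof.
move=> l_gt0 r_ge3 n_big; have k_le_n : l.*2.+1 <= n by lia.
have n_gt0 : 0 < n by lia.
exists (consecutive l_gt0 k_le_n); split; first exact: semi_valid_consecutive.
move=> C' /semi_valid_rot [j jk sorted_j].
rewrite (Hgraph_unrolled jk sorted_j n_gt0 r (ltn0Sn l)).
have r_gt1 : 1 < r by lia.
have exact_count := card_Hgraph_consecutive l_gt0 k_le_n (ltnW r_gt1).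
have lower_bound := hitting_lower_bound n_gt0 (ltn0Sn l)
  (unrolled_incr jk sorted_j n_gt0) (unrolled_period jk sorted_j n_gt0) r_gt1.
by apply: (count_comparison _ _ _ _ exact_count lower_bound); lia.
Qed.
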